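(* Let $\boldsymbol\varphi$ be a random variable whose distribution is determined by a parameter $\theta\in\Theta\subseteq\mathbb{R}$, and let $I_{\boldsymbol\varphi}$ denote the support of $\boldsymbol\varphi$. Let $\mathbb{F}(\cdot,\cdot)$ and $\mathbb{G}(\cdot,\cdot)$ be bivariate functions such that: (i) for each $z\in I_{\boldsymbol\varphi}$, $\mathbb{F}(z,\vartheta)$ is non-increasing in $\vartheta\ge z$; (ii) for each $z\in I_{\boldsymbol\varphi}$, $\mathbb{G}(z,\vartheta)$ is non-decreasing in $\vartheta\le z$; (iii) $\Pr\{\boldsymbol\varphi\le z\mid\theta\}\le\mathbb{F}(z,\theta)$ for $z$ no greater than $\theta\in\Theta$, and $\Pr\{\boldsymbol\varphi\ge z\mid\theta\}\le\mathbb{G}(z,\theta)$ for $z$ no less than $\theta\in\Theta$. Let $\delta\in(0,1)$, and let $L(\boldsymbol\varphi,\delta)$ and $U(\boldsymbol\varphi,\delta)$ be functions of $\boldsymbol\varphi$ and $\delta$ such that the event $$\Big\{\mathbb{F}(\boldsymbol\varphi,U(\boldsymbol\varphi,\delta))\le\tfrac\delta2,\ \mathbb{G}(\boldsymbol\varphi,L(\boldsymbol\varphi,\delta))\le\tfrac\delta2,\ L(\boldsymbol\varphi,\delta)\le\boldsymbol\varphi\le U(\boldsymbol\varphi,\delta)\Big\}$$ is a sure event. Then $\Pr\{L(\boldsymbol\varphi,\delta)\le\theta\le U(\boldsymbol\varphi,\delta)\mid\theta\}\ge1-\delta$ for every $\theta\in\Theta$.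
   Context: $\Pr\{\cdot\mid\theta\}$ denotes probability when the distribution of $\boldsymbol\varphi$ has parameter $\theta$. *)

From HB Require Import structures.
From mathcomp Require Import all_boot all_order all_algebra.
From mathcomp Require Import all_classical all_reals all_analysis.
Set Implicit Arguments. Unset Strict Implicit. Unset Printing Implicit Defensive.

From HB Require Import structures.
From mathcomp Require Import all_boot all_order all_algebra.
From mathcomp Require Import all_classical all_reals all_analysis.
Import Order.TTheory GRing.Theory Num.Theory.
Local Open Scope classical_set_scope.
Local Open Scope ring_scope.

(* On the event [U(phi) < theta], monotonicity (i) gives
   [F(phi, theta) <= F(phi, U(phi)) <= delta/2], so [phi] lies in the set [S]
   of levels [z <= theta] with [F(z, theta) <= delta/2], and by (iii) every
   sublevel event [{phi <= z}], [z \in S], has probability at most [delta/2].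
   Exhausting [{phi \in S}] by an increasing sequence of such events (levels
   approaching [sup S] from below) and continuity from below give
   [P{U(phi) < theta} <= delta/2]; symmetrically [P{theta < L(phi)} <= delta/2],
   and the two tails together have probability at most [delta]. *)

Lemma nondecreasing_cofinal_seq (R : realType) (S : set R) : S !=set0 ->
  exists t : R^nat, [/\ nondecreasing_seq t,
    forall n, exists2 s, S s & t n <= s &
    forall x, S x -> exists n, x <= t n].
Proof.
move=> S0; have [supS|unbounded] := pselect (has_sup S); last first.
  have /(_ unbounded) unbS := (has_supPn S0).1.
  exists (fun n => n%:R); split.
  - by move=> n m nm; rewrite ler_nat.
  - by move=> n; have [s Ss /ltW ns] := unbS n%:R; exists s.
  - move=> x _; exists (Num.bound `|x|).
    exact/ltW/(le_lt_trans (ler_norm _) (archi_boundP (normr_ge0 _))).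
have S_le_sup x : S x -> x <= sup S by move=> Sx; exact: sup_upper_bound.
have [Ssup|Snsup] := pselect (S (sup S)).
  exists (fun=> sup S); split => //; first by move=> n; exists (sup S).
  by move=> x Sx; exists 0%N; exact: S_le_sup.
exists (fun n => sup S - n.+1%:R^-1); split.
- by move=> n m nm; rewrite lerD2l lerN2 lef_pV2 ?posrE ?ltr0n // ler_nat.
- move=> n; have n1_gt0 : 0 < n.+1%:R^-1 :> R by rewrite invr_gt0 ltr0n.
  by have [s Ss /ltW ns] := sup_adherent n1_gt0 supS; exists s.
- move=> x Sx; have x_lt_sup : x < sup S.
    by rewrite lt_neqAle S_le_sup // andbT; apply: contra_notN Snsup => /eqP <-.
  have gap_gt0 : 0 < sup S - x by rewrite subr_gt0.
  exists (Num.bound (sup S - x)^-1).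
  have : (Num.bound (sup S - x)^-1).+1%:R^-1 < sup S - x.
    rewrite -[ltRHS]invrK ltf_pV2 ?posrE ?ltr0n ?invr_gt0 //.
    apply: lt_trans (archi_boundP _) _; first by rewrite invr_ge0 ltW.
    by rewrite ltr_nat.
  by rewrite lerBrDr -lerBrDl => /ltW.
Qed.

Section sublevel_sets.
Context {d : measure_display} {T : measurableType d} {R : realType}.

Lemma measurable_sublevel (f : T -> R) (z : R) :
  measurable_fun setT f -> measurable [set w | f w <= z].
Proof.
move=> mf; have := mf measurableT _ (measurable_itv `]-oo, z]).
by rewrite setTI; congr measurable; apply/seteqP; split => w /=; rewrite in_itv.
Qed.

Lemma measurable_superlevel (f : T -> R) (z : R) :
  measurable_fun setT f -> measurable [set w | z <= f w].
Proof.
move=> mf; have := mf measurableT _ (measurable_itv `[z, +oo[).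
rewrite setTI; congr measurable.
by apply/seteqP; split => w /=; rewrite in_itv /= andbT.
Qed.

Lemma measurable_strict_sublevel (f : T -> R) (z : R) :
  measurable_fun setT f -> measurable [set w | f w < z].
Proof.
move=> mf; rewrite (_ : [set w | f w < z] = ~` [set w | z <= f w]).
  exact/measurableC/measurable_superlevel.
by apply/seteqP; split => w /=; rewrite ltNge => /negP.
Qed.

Lemma measurable_strict_superlevel (f : T -> R) (z : R) :
  measurable_fun setT f -> measurable [set w | z < f w].
Proof.
move=> mf; rewrite (_ : [set w | z < f w] = ~` [set w | f w <= z]).
  exact/measurableC/measurable_sublevel.
by apply/seteqP; split => w /=; rewrite ltNge => /negP.
Qed.

Variable mu : {measure set T -> \bar R}.

Lemma le_measure_nondecreasing_bigcup (B : (set T)^nat) (A : set T) (c : R) :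
  (forall n, measurable (B n)) -> nondecreasing_seq B ->
  measurable A -> A `<=` \bigcup_n B n ->
  (forall n, (mu (B n) <= c%:E)%E) -> (mu A <= c%:E)%E.
Proof.
move=> mB ndB mA AB Bc.
have mUB : measurable (\bigcup_n B n) by exact: bigcupT_measurable.
have cvgB := @nondecreasing_cvg_mu _ _ _ mu _ mB mUB ndB.
have UBc : (mu (\bigcup_n B n) <= c%:E)%E.
  rewrite -(cvg_lim _ cvgB) //.
  by apply: lime_le; [apply/cvg_ex; eexists; exact: cvgB|exact: nearW].
by apply: le_trans (le_measure _ _ _ AB) UBc; rewrite inE.
Qed.

Lemma le_measure_sublevel_bound (f : T -> R) (S : set R) (A : set T) (c : R) :
  measurable_fun setT f -> 0 <= c -> measurable A -> A `<=` f @^-1` S ->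
  (forall z, S z -> (mu [set w | (f w <= z)%R] <= c%:E)%E) -> (mu A <= c%:E)%E.
Proof.
move=> mf c_ge0 mA AS Sc; have [S_empty|S0] := eqVneq S set0.
  by move: AS; rewrite S_empty preimage_set0 subset0 => ->; rewrite measure0 lee_fin.
have [t [ndt tS Scof]] := @nondecreasing_cofinal_seq _ S ((set0P S).1 S0).
apply: (@le_measure_nondecreasing_bigcup (fun n => [set w | f w <= t n])) => //.
- by move=> n; exact: measurable_sublevel.
- by move=> n m nm; apply/subsetPset => w /= /le_trans; apply; exact: ndt.
- by move=> w /AS /Scof [n fwt]; exists n.
- move=> n; have [s Ss tns] := tS n; apply: le_trans (Sc _ Ss).
  apply: le_measure; rewrite ?inE; [exact: measurable_sublevel..|].
  by move=> w /= /le_trans; apply.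
Qed.

Lemma upper_limit_tail_bound (phi V : T -> R) (F : R -> R -> R) (c th : R) :
  measurable_fun setT phi -> measurable_fun setT V -> 0 <= c ->
  (forall w a b, phi w <= a -> a <= b -> F (phi w) b <= F (phi w) a) ->
  (forall z, z <= th -> (mu [set w | (phi w <= z)%R] <= (F z th)%:E)%E) ->
  (forall w, F (phi w) (V w) <= c) -> (forall w, phi w <= V w) ->
  (mu [set w | (V w < th)%R] <= c%:E)%E.
Proof.
move=> mphi mV c_ge0 Fnonincr Fbound FVc phiV.
apply: (@le_measure_sublevel_bound phi [set z | z <= th /\ F z th <= c]) => //.
- exact: measurable_strict_sublevel.
- move=> w /= Vth; rewrite /preimage /=.
  split; first exact: le_trans (phiV w) (ltW Vth).
  by apply: le_trans (FVc w); apply: Fnonincr => //; exact: ltW.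
- by move=> z [zth Fc]; apply: le_trans (Fbound _ zth) _; rewrite lee_fin.
Qed.

(* [upper_limit_tail_bound] applied to [-phi], [-W] and [-th]. *)
Lemma lower_limit_tail_bound (phi W : T -> R) (G : R -> R -> R) (c th : R) :
  measurable_fun setT phi -> measurable_fun setT W -> 0 <= c ->
  (forall w a b, a <= b -> b <= phi w -> G (phi w) a <= G (phi w) b) ->
  (forall z, th <= z -> (mu [set w | (z <= phi w)%R] <= (G z th)%:E)%E) ->
  (forall w, G (phi w) (W w) <= c) -> (forall w, W w <= phi w) ->
  (mu [set w | (th < W w)%R] <= c%:E)%E.
Proof.
move=> mphi mW c_ge0 Gnondecr Gbound GWc Wphi.
have := @upper_limit_tail_bound _ _ (fun z t => G (- z) (- t)) _ (- th)
  (measurable_realfun.measurable_funN mphi)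
  (measurable_realfun.measurable_funN mW) c_ge0.
rewrite (_ : [set w | - W w < - th] = [set w | th < W w]);
  last by apply/seteqP; split => w /=; rewrite ltrN2.
apply => [w a b phia ab|z zth|w|w] /=.
- by rewrite opprK; apply: Gnondecr; rewrite ?lerN2 // lerNl.
- rewrite opprK (_ : [set w | - phi w <= z] = [set w | - z <= phi w]).
    by apply: Gbound; rewrite lerNr.
  by apply/seteqP; split => w /=; rewrite lerNl.
- by rewrite !opprK.
- by rewrite lerN2.
Qed.

End sublevel_sets.

Lemma probability_between_ge (d : measure_display) (T : measurableType d)
    (R : realType) (P : probability T R) (W V : T -> R) (th a b : R) :
  measurable_fun setT W -> measurable_fun setT V ->
  (P [set w | (V w < th)%R] <= a%:E)%E -> (P [set w | (th < W w)%R] <= b%:E)%E ->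
  ((1 - (a + b))%:E <= P [set w | (W w <= th <= V w)%R])%E.
Proof.
move=> mW mV Va Wb.
have Ecompl : ~` [set w | W w <= th <= V w] = [set w | V w < th] `|` [set w | th < W w].
  apply/seteqP; split => w /=.
    by move/negP; rewrite negb_and -!ltNge => /orP[]; [right|left].
  by case=> lt; apply/negP; rewrite negb_and -!ltNge lt ?orbT.
have mVlt := measurable_strict_sublevel _ th mV.
have mWgt := measurable_strict_superlevel _ th mW.
have mE : measurable [set w | W w <= th <= V w].
  by rewrite -(setCK [set w | _ <= th <= _]) Ecompl; apply/measurableC/measurableU.
have Ecompl_le : (P (~` [set w | (W w <= th <= V w)%R]) <= (a + b)%:E)%E.
  rewrite Ecompl; apply: le_trans (measureU2 _ mVlt mWgt) _.
  by rewrite EFinD; exact: leeD.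
move: Ecompl_le; rewrite probability_setC //.
rewrite -(fineK (fin_num_measure _ _ mE)) -EFinB !lee_fin => ?.
by rewrite lerBlDr addrC -lerBlDr.
Qed.

Theorem theorem7 (d : measure_display) (T : measurableType d) (R : realType)
  (Theta : set R) (P : R -> probability T R) (phi : T -> R)
  (F G : R -> R -> R) (L U : R -> R -> R) (delta : R) :
  measurable_fun setT phi ->
  (* (i) *)
  (forall z, z \in range phi -> forall a b, z <= a -> a <= b -> F z b <= F z a) ->
  (* (ii) *)
  (forall z, z \in range phi -> forall a b, a <= b -> b <= z -> G z a <= G z b) ->
  (* (iii) *)
  (forall th, th \in Theta -> forall z, z <= th ->
     (P th [set w | (phi w <= z)%R] <= (F z th)%:E)%E) ->
  (forall th, th \in Theta -> forall z, th <= z ->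
     (P th [set w | (z <= phi w)%R] <= (G z th)%:E)%E) ->
  0 < delta < 1 ->
  measurable_fun setT (fun z => L z delta) ->
  measurable_fun setT (fun z => U z delta) ->
  (* the sure event *)
  (forall w, [/\ F (phi w) (U (phi w) delta) <= delta / 2,
                 G (phi w) (L (phi w) delta) <= delta / 2 &
                 L (phi w) delta <= phi w <= U (phi w) delta]) ->
  forall th, th \in Theta ->
    ((1 - delta)%:E <=
      P th [set w | (L (phi w) delta <= th <= U (phi w) delta)%R])%E.
Proof.
move=> mphi Fnonincr Gnondecr Fbound Gbound /andP[delta_gt0 _] mL mU sure th Th.
have phiR w : phi w \in range phi by apply/mem_set; exists w.
have mLphi := measurableT_comp mL mphi; have mUphi := measurableT_comp mU mphi.
have halfdelta_ge0 : 0 <= delta / 2 by rewrite divr_ge0 // ltW.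
have Utail : (P th [set w | (U (phi w) delta < th)%R] <= (delta / 2)%:E)%E.
  apply: (upper_limit_tail_bound _ _ _ F _ _ mphi mUphi halfdelta_ge0 _ (Fbound _ Th)).
  - by move=> w; exact: Fnonincr (phiR w).
  - by move=> w; have [] := sure w.
  - by move=> w; have [_ _ /andP[]] := sure w.
have Ltail : (P th [set w | (th < L (phi w) delta)%R] <= (delta / 2)%:E)%E.
  apply: (lower_limit_tail_bound _ _ _ G _ _ mphi mLphi halfdelta_ge0 _ (Gbound _ Th)).
  - by move=> w; exact: Gnondecr (phiR w).
  - by move=> w; have [] := sure w.
  - by move=> w; have [_ _ /andP[]] := sure w.
by rewrite [X in (1 - X)%:E]splitr; apply: probability_between_ge Utail Ltail.
Qed.
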